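(* Let $k\in\mathbb{N}$, $k>2$, let $\mathcal{O}$ be an oval with support function $h$, let $\mathcal{P}_k$ be its $k$th Order Preserving Set and $D_{\mathcal{O}}$ its Steiner disk. Then \[ L_{\mathcal{O}}^2-4\pi A_{\mathcal{O}}-4\pi|A_{\mathcal{P}_k}|\geqslant 6\pi\, d_2^2(\mathcal{O},\mathcal{P}_k+D_{\mathcal{O}}), \] where $L_{\mathcal{O}}$ is the length of $\mathcal{O}$ and $A_{\mathcal{O}}$ the area it bounds.
   Context: An oval is a simple, closed, regular, smooth planar curve with nowhere vanishing curvature. Write $u(s)=(\cos s,\sin s)$, $u'(s)=(-\sin s,\cos s)$. The support function of $\mathcal{O}$ is $h(s)=\sup_{x\in\mathcal{O}}\langle x,u(s)\rangle=a_0+\sum_{n\geqslant1}(a_n\cos(ns)+b_n\sin(ns))$, and $\mathcal{O}(s)=h(s)u(s)+h'(s)u'(s)$. The average width is $\overline{w}=\frac1\pi\int_0^{2\pi}h=2a_0$; the Steiner point is $(a_1,b_1)=\frac1\pi\int_0^{2\pi}h(s)u(s)\,ds$. The Steiner disk $D_{\mathcal{O}}$ is the disk centered at the Steiner point of radius $\frac12|\overline{w}|$; its support function is $a_0+a_1\cos s+b_1\sin s$. The $k$th Order Preserving Set $\mathcal{P}_k$ is the curve $\mathcal{P}_k(s)=h_k(s)u(s)+h_k'(s)u'(s)$ with support function $h_k(s)=\frac1k\sum_{j=0}^{k-1}h(s+\tfrac{2\pi j}{k})-\frac12\overline{w}$ (equivalently $\mathcal{P}_k(s)=\frac{1}{k}\sum_{j=1}^{k}\big(\cos(\tfrac{2\pi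 j}{k})\mathcal{O}(s+\tfrac{2\pi j}{k})-\sin(\tfrac{2\pi j}{k})\mathcal{O}(s+\tfrac{2\pi j}{k})^{\perp}\big)-\frac12\overline{w}u(s)$ with $(x,y)^\perp=(-y,x)$). Its oriented area is $A_{\mathcal{P}_k}=\frac12\int_0^{2\pi}(h_k^2-h_k'^2)\,ds$. The Minkowski sum $\mathcal{P}_k+D_{\mathcal{O}}$ is the convex body with support function $h_k+a_0+a_1\cos s+b_1\sin s$. For two bodies with support functions $h_1,h_2$, $d_2=\left(\int_0^{2\pi}|h_1(s)-h_2(s)|^2ds\right)^{1/2}$. *)

From Stdlib Require Import Reals Lra.
From Coquelicot Require Import Coquelicot.
Open Scope R_scope.

(* An oval is described through its support function h : R -> R
   (s is the angle of the outer normal u(s) = (cos s, sin s)).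
   h is the support function of an oval iff h is smooth, 2*PI-periodic,
   and the radius of curvature h + h'' is everywhere positive
   (nowhere vanishing curvature). *)
Definition smooth (f : R -> R) : Prop :=
  forall (n : nat) (x : R), ex_derive (Derive_n f n) x.

Definition is_oval_support (h : R -> R) : Prop :=
  (forall s, h (s + 2 * PI) = h s) /\
  smooth h /\
  (forall s, 0 < h s + Derive_n h 2 s).

(* The curve O(s) = h(s) u(s) + h'(s) u'(s), coordinates. *)
Definition curve_x (h : R -> R) (s : R) : R :=
  h s * cos s - Derive h s * sin s.
Definition curve_y (h : R -> R) (s : R) : R :=
  h s * sin s + Derive h s * cos s.

Definition oval_length (h : R -> R) : R :=
  RInt (fun s => sqrt ((Derive (curve_x h) s) ^ 2 + (Derive (curve_y h) s) ^ 2))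
       0 (2 * PI).

(* Area bounded by the oval (Green's formula; the parametrization is
   positively oriented since h + h'' > 0). *)
Definition oval_area (h : R -> R) : R :=
  / 2 * RInt (fun s => curve_x h s * Derive (curve_y h) s
                     - curve_y h s * Derive (curve_x h) s) 0 (2 * PI).

Definition avg_width (h : R -> R) : R := / PI * RInt h 0 (2 * PI).
Definition a0 (h : R -> R) : R := avg_width h / 2.
Definition a1 (h : R -> R) : R := / PI * RInt (fun s => h s * cos s) 0 (2 * PI).
Definition b1 (h : R -> R) : R := / PI * RInt (fun s => h s * sin s) 0 (2 * PI).

Definition ops_support (k : nat) (h : R -> R) (s : R) : R :=
  / INR k * sum_f_R0 (fun j => h (s + 2 * PI * INR j / INR k)) (k - 1)
  - / 2 * avg_width h.

(* Oriented area of P_k. *)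
Definition ops_area (k : nat) (h : R -> R) : R :=
  / 2 * RInt (fun s => (ops_support k h s) ^ 2 - (Derive (ops_support k h) s) ^ 2)
             0 (2 * PI).

Definition steiner_disk_support (h : R -> R) (s : R) : R :=
  a0 h + a1 h * cos s + b1 h * sin s.

Definition ops_plus_disk_support (k : nat) (h : R -> R) (s : R) : R :=
  ops_support k h s + steiner_disk_support h s.

Definition support_dist2 (h1 h2 : R -> R) : R :=
  sqrt (RInt (fun s => (Rabs (h1 s - h2 s)) ^ 2) 0 (2 * PI)).

From Stdlib Require Import Reals Lra Lia.
From Coquelicot Require Import Coquelicot.
Open Scope R_scope.

(* Write [rot_avg k p] for the average of p over the rotations by 2πj/k, j < k. For the
   support function h of the oval, L = ∫h and A = ½∫(h² − h'²), and the support function of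
   P_k is [rot_avg k h − a0 h]. On 2π-periodic functions [rot_avg k] is self-adjoint and
   idempotent, and for k ≥ 2 it annihilates cos and sin. Hence [rot_avg k h − a0 h] and
   g := h − rot_avg k h − a1 cos − b1 sin, the difference of the support functions of O and of
   P_k + D_O, have no Fourier modes of order ≤ 1, and a direct computation gives
     L² − 4πA + 4πA_{P_k} = 2π (∫g'² − ∫g²).
   Wirtinger's inequality ∫f'² ≥ 4∫f² for such functions shows A_{P_k} ≤ 0, so the left-hand
   side is the deficit of the theorem, and bounds the right-hand side below by 6π∫g² = 6π d₂².
   Wirtinger's inequality is proved without Parseval's identity: for the sum F_N of the first
   N+1 Dirichlet kernels, Bessel's inequality gives ∫f·(f∗F_N) ≤ (N+1)(π/2)∫f'², while a
   second-order Taylor expansion of f against the nonnegative kernel F_N gives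
   ∫f·(f∗F_N) ≥ 2π(N+1)∫f² − C with C independent of N. *)

Definition continuous_R (f : R -> R) : Prop := forall x, continuous f x.

Definition periodic (f : R -> R) : Prop := forall x, f (x + 2 * PI) = f x.

Notation Int2PI f := (RInt f 0 (2 * PI) : R).

Lemma continuous_R_const (c : R) : continuous_R (fun _ => c).
Proof. intros x; apply continuous_const. Qed.

Lemma continuous_R_id : continuous_R (fun x => x).
Proof. intros x; apply continuous_id. Qed.

Lemma continuous_R_plus (f g : R -> R) :
  continuous_R f -> continuous_R g -> continuous_R (fun x => f x + g x).
Proof. intros Hf Hg x; apply (continuous_plus (V := R_NormedModule)); auto. Qed.

Lemma continuous_R_opp (f : R -> R) :
  continuous_R f -> continuous_R (fun x => - f x).
Proof. intros Hf x; apply (continuous_opp (V := R_NormedModule)); auto. Qed.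

Lemma continuous_R_minus (f g : R -> R) :
  continuous_R f -> continuous_R g -> continuous_R (fun x => f x - g x).
Proof. intros Hf Hg x; apply (continuous_minus (V := R_NormedModule)); auto. Qed.

Lemma continuous_R_mult (f g : R -> R) :
  continuous_R f -> continuous_R g -> continuous_R (fun x => f x * g x).
Proof. intros Hf Hg x; apply (continuous_mult (K := R_AbsRing) f g); auto. Qed.

Lemma continuous_R_pow (f : R -> R) (n : nat) :
  continuous_R f -> continuous_R (fun x => f x ^ n).
Proof.
  intros Hf; induction n as [|n IH]; simpl.
  - apply continuous_R_const.
  - apply (continuous_R_mult f (fun x => f x ^ n)); auto.
Qed.

Lemma continuous_R_comp (g f : R -> R) :
  continuous_R g -> continuous_R f -> continuous_R (fun x => f (g x)).
Proof. intros Hg Hf x; apply continuous_comp; auto. Qed.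

Lemma continuous_R_derive (f f' : R -> R) :
  (forall x, is_derive f x (f' x)) -> continuous_R f.
Proof. intros Hd x; apply (ex_derive_continuous (V := R_NormedModule)); exists (f' x); auto. Qed.

Lemma Derive_is_derive (f f' : R -> R) (x : R) :
  (forall y, is_derive f y (f' y)) -> Derive (fun y => f y) x = f' x.
Proof. intros Hd; apply is_derive_unique, Hd. Qed.

Lemma continuous_R_cos : continuous_R cos.
Proof. apply (continuous_R_derive cos (fun x => - sin x)); intros x; auto_derive; auto; ring. Qed.

Lemma continuous_R_sin : continuous_R sin.
Proof. apply (continuous_R_derive sin cos); intros x; auto_derive; auto; ring. Qed.

Lemma continuous_R_abs : continuous_R Rabs.
Proof. intros x; apply continuity_pt_filterlim, Rcontinuity_abs. Qed.

Lemma continuous_R_sum (F : nat -> R -> R) (n : nat) :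
  (forall j, continuous_R (F j)) -> continuous_R (fun x => sum_f_R0 (fun j => F j x) n).
Proof.
  intros HF; induction n as [|n IH]; simpl; [apply HF|].
  apply (continuous_R_plus (fun x => sum_f_R0 (fun j => F j x) n)); auto.
Qed.

Create HintDb continuity_R discriminated.
#[export] Hint Resolve continuous_R_cos continuous_R_sin continuous_R_abs : continuity_R.

Ltac continuity_R :=
  lazymatch goal with
  | |- continuous_R (fun _ => ?c) => apply (continuous_R_const c)
  | |- continuous_R (fun x => x) => apply continuous_R_id
  | |- continuous_R (fun x => @?a x + @?b x) => apply (continuous_R_plus a b); continuity_R
  | |- continuous_R (fun x => @?a x - @?b x) => apply (continuous_R_minus a b); continuity_R
  | |- continuous_R (fun x => - @?a x) => apply (continuous_R_opp a); continuity_R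
  | |- continuous_R (fun x => @?a x * @?b x) => apply (continuous_R_mult a b); continuity_R
  | |- continuous_R (fun x => @?a x ^ ?n) => apply (continuous_R_pow a n); continuity_R
  | |- continuous_R (fun x => sum_f_R0 (fun j => @?F j x) ?n) =>
      apply (continuous_R_sum F n); intros ?; cbv beta; continuity_R
  | |- continuous_R (fun x => ?f (@?a x)) =>
      apply (continuous_R_comp a f); [continuity_R | continuity_R]
  | |- continuous_R _ => first [assumption | solve [eauto with continuity_R]]
  end.

Lemma ex_RInt_continuous_R (f : R -> R) (a b : R) : continuous_R f -> ex_RInt f a b.
Proof. intros Hf; apply (ex_RInt_continuous (V := R_CompleteNormedModule)); auto. Qed.

Lemma RInt_plus_R (f g : R -> R) (a b : R) : continuous_R f -> continuous_R g ->
  RInt (fun x => f x + g x) a b = RInt f a b + RInt g a b :> R.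
Proof. intros; apply (RInt_plus f g); apply ex_RInt_continuous_R; auto. Qed.

Lemma RInt_minus_R (f g : R -> R) (a b : R) : continuous_R f -> continuous_R g ->
  RInt (fun x => f x - g x) a b = RInt f a b - RInt g a b :> R.
Proof. intros; apply (RInt_minus f g); apply ex_RInt_continuous_R; auto. Qed.

Lemma RInt_opp_R (f : R -> R) (a b : R) : continuous_R f ->
  RInt (fun x => - f x) a b = - RInt f a b :> R.
Proof. intros; apply (RInt_opp f); apply ex_RInt_continuous_R; auto. Qed.

Lemma RInt_scal_R (f : R -> R) (c a b : R) : continuous_R f ->
  RInt (fun x => c * f x) a b = c * RInt f a b :> R.
Proof. intros; apply (RInt_scal f a b c); apply ex_RInt_continuous_R; auto. Qed.

Lemma RInt_ext_R (f g : R -> R) (a b : R) :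
  (forall x, f x = g x) -> RInt f a b = RInt g a b :> R.
Proof. intros E; apply RInt_ext; intros x _; apply E. Qed.

Lemma RInt_const_R (c a b : R) : RInt (fun _ => c) a b = c * (b - a) :> R.
Proof. rewrite RInt_const; unfold scal; simpl; unfold mult; simpl; ring. Qed.

Lemma RInt_swap_R (f : R -> R) (a b : R) : continuous_R f -> RInt f b a = - RInt f a b :> R.
Proof.
  intros Hf; rewrite <- (opp_RInt_swap f a b); [reflexivity | apply ex_RInt_continuous_R; auto].
Qed.

Lemma RInt_sum_R (F : nat -> R -> R) (n : nat) (a b : R) : (forall j, continuous_R (F j)) ->
  RInt (fun x => sum_f_R0 (fun j => F j x) n) a b = sum_f_R0 (fun j => RInt (F j) a b) n :> R.
Proof.
  intros HF; induction n as [|n IH]; simpl; [apply RInt_ext_R; auto|].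
  rewrite (RInt_plus_R (fun x => sum_f_R0 (fun j => F j x) n) (F (S n))), IH; auto.
  apply continuous_R_sum; auto.
Qed.

Ltac RInt_lin :=
  repeat first
  [ rewrite RInt_plus_R by continuity_R
  | rewrite RInt_minus_R by continuity_R
  | rewrite RInt_scal_R by continuity_R
  | rewrite RInt_opp_R by continuity_R ].

Ltac RInt_lin_in H :=
  repeat first
  [ rewrite RInt_plus_R in H by continuity_R
  | rewrite RInt_minus_R in H by continuity_R
  | rewrite RInt_scal_R in H by continuity_R
  | rewrite RInt_opp_R in H by continuity_R ].

Lemma RInt_derive_R (F f : R -> R) (a b : R) :
  (forall x, is_derive F x (f x)) -> continuous_R f -> RInt f a b = F b - F a :> R.
Proof.
  intros HF Hf; apply is_RInt_unique.
  apply (is_RInt_derive (V := R_CompleteNormedModule) F f); auto.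
Qed.

Lemma RInt_comp_plus_R (f : R -> R) (c a b : R) : continuous_R f ->
  RInt (fun x => f (x + c)) a b = RInt f (a + c) (b + c) :> R.
Proof.
  intros Hf.
  replace (a + c) with (1 * a + c) by ring; replace (b + c) with (1 * b + c) by ring.
  rewrite <- RInt_comp_lin by (apply ex_RInt_continuous_R; auto).
  apply RInt_ext; intros x _; unfold scal; simpl; unfold mult; simpl.
  rewrite !Rmult_1_l; reflexivity.
Qed.

Lemma RInt_comp_opp_R (f : R -> R) (c a b : R) : continuous_R f ->
  RInt (fun x => f (c - x)) a b = RInt f (c - b) (c - a) :> R.
Proof.
  intros Hf.
  replace (c - a) with (-1 * a + c) by ring; replace (c - b) with (-1 * b + c) by ring.
  rewrite (RInt_swap_R f) by auto.
  rewrite <- RInt_comp_lin by (apply ex_RInt_continuous_R; auto).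
  rewrite (RInt_ext (fun y => scal (-1) (f (-1 * y + c))) (fun y => - f (c - y))).
  - rewrite RInt_opp_R by continuity_R; symmetry; apply Ropp_involutive.
  - intros x _; unfold scal; simpl; unfold mult; simpl.
    replace (-1 * x + c) with (c - x) by ring; ring.
Qed.

Lemma RInt_periodic_interval (p : R -> R) (a : R) : continuous_R p -> periodic p ->
  RInt p a (a + 2 * PI) = Int2PI p.
Proof.
  intros Hc Hp.
  assert (Hshift : RInt p (2 * PI) (a + 2 * PI) = RInt p 0 a :> R).
  { rewrite <- (Rplus_0_l (2 * PI)) at 1.
    rewrite <- RInt_comp_plus_R by auto.
    apply RInt_ext; intros x _; apply Hp. }
  rewrite <- (RInt_Chasles p a 0 (a + 2 * PI)) by (apply ex_RInt_continuous_R; auto).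
  rewrite <- (RInt_Chasles p 0 (2 * PI) (a + 2 * PI)) by (apply ex_RInt_continuous_R; auto).
  rewrite Hshift, (RInt_swap_R p 0 a) by auto.
  unfold plus; simpl; ring.
Qed.

Lemma RInt_periodic_translate (p : R -> R) (c : R) : continuous_R p -> periodic p ->
  Int2PI (fun x => p (x + c)) = Int2PI p.
Proof.
  intros Hc Hp.
  rewrite RInt_comp_plus_R, Rplus_0_l, Rplus_comm by auto.
  apply RInt_periodic_interval; auto.
Qed.

Lemma RInt_periodic_centered (p : R -> R) : continuous_R p -> periodic p ->
  RInt p (- PI) PI = Int2PI p.
Proof.
  intros Hc Hp. rewrite <- (RInt_periodic_interval p (- PI)) by auto.
  f_equal; ring.
Qed.

Lemma periodic_derive (f f' : R -> R) :
  (forall x, is_derive f x (f' x)) -> periodic f -> periodic f'.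
Proof.
  intros Hd Hp x.
  assert (D : is_derive f x (f' (x + 2 * PI))).
  { apply (is_derive_ext (fun y => f (y + 2 * PI))); [intros; apply Hp|].
    auto_derive; [exists (f' (x + 2 * PI)); apply Hd|].
    rewrite (is_derive_unique _ _ _ (Hd _)); ring. }
  rewrite <- (is_derive_unique _ _ _ D); apply is_derive_unique, Hd.
Qed.

Lemma continuous_R_bounded (g : R -> R) (a b : R) : a <= b -> continuous_R g ->
  exists M, forall z, a <= z <= b -> Rabs (g z) <= M.
Proof.
  intros Hab Hg.
  destruct (continuity_ab_maj (fun z => Rabs (g z)) a b Hab) as [z0 [Hz0 _]].
  - intros c _. apply (continuity_pt_comp g Rabs).
    + apply continuity_pt_filterlim, Hg.
    + apply Rcontinuity_abs.
  - exists (Rabs (g z0)); auto.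
Qed.

Lemma sin_INR_mult_2PI (n : nat) : sin (INR n * (2 * PI)) = 0.
Proof.
  replace (INR n * (2 * PI)) with (0 + 2 * INR n * PI) by ring.
  rewrite sin_period; apply sin_0.
Qed.

Lemma cos_INR_mult_2PI (n : nat) : cos (INR n * (2 * PI)) = 1.
Proof.
  replace (INR n * (2 * PI)) with (0 + 2 * INR n * PI) by ring.
  rewrite cos_period; apply cos_0.
Qed.

Lemma cos_periodic : periodic cos.
Proof. intros x; rewrite cos_plus, cos_2PI, sin_2PI; ring. Qed.

Lemma sin_periodic : periodic sin.
Proof. intros x; rewrite sin_plus, cos_2PI, sin_2PI; ring. Qed.

Lemma INR_sq_neq (n m : nat) : n <> m -> INR n * INR n - INR m * INR m <> 0.
Proof.
  intros Hnm E.
  assert (Hnm0 : INR n <> INR m) by (apply not_INR; auto).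
  pose proof (pos_INR n); pose proof (pos_INR m).
  assert (E' : (INR n - INR m) * (INR n + INR m) = 0) by (rewrite <- E; ring).
  apply Rmult_integral in E'; destruct E'; lra.
Qed.

Lemma RInt_cos_cos_INR_neq (n m : nat) : n <> m ->
  Int2PI (fun x => cos (INR n * x) * cos (INR m * x)) = 0.
Proof.
  intros Hnm; pose proof (INR_sq_neq n m Hnm).
  rewrite (RInt_derive_R (fun x => (INR n * sin (INR n * x) * cos (INR m * x)
      - INR m * cos (INR n * x) * sin (INR m * x)) / (INR n * INR n - INR m * INR m)))
    by (continuity_R || (intros x; auto_derive; auto; field; auto)).
  rewrite !sin_INR_mult_2PI, !Rmult_0_r, !sin_0; field; auto.
Qed.

Lemma RInt_sin_sin_INR_neq (n m : nat) : n <> m ->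
  Int2PI (fun x => sin (INR n * x) * sin (INR m * x)) = 0.
Proof.
  intros Hnm; pose proof (INR_sq_neq n m Hnm).
  rewrite (RInt_derive_R (fun x => (INR m * sin (INR n * x) * cos (INR m * x)
      - INR n * cos (INR n * x) * sin (INR m * x)) / (INR n * INR n - INR m * INR m)))
    by (continuity_R || (intros x; auto_derive; auto; field; auto)).
  rewrite !sin_INR_mult_2PI, !Rmult_0_r, !sin_0; field; auto.
Qed.

Lemma RInt_sin_cos_INR (n m : nat) :
  Int2PI (fun x => sin (INR n * x) * cos (INR m * x)) = 0.
Proof.
  destruct (Nat.eq_dec n m) as [<-|Hnm].
  - destruct (Nat.eq_dec n 0) as [->|Hn].
    + rewrite (RInt_ext_R _ (fun _ => 0)), RInt_const_R; [ring|].
      intros x; simpl; rewrite Rmult_0_l, sin_0; ring.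
    + assert (Hn0 : INR n <> 0) by (apply not_0_INR; auto).
      rewrite (RInt_derive_R (fun x => sin (INR n * x) ^ 2 / (2 * INR n)))
        by (continuity_R || (intros x; auto_derive; auto; field; auto)).
      rewrite sin_INR_mult_2PI, Rmult_0_r, sin_0; field; auto.
  - pose proof (INR_sq_neq n m Hnm).
    rewrite (RInt_derive_R (fun x => - (INR n * cos (INR n * x) * cos (INR m * x)
        + INR m * sin (INR n * x) * sin (INR m * x)) / (INR n * INR n - INR m * INR m)))
      by (continuity_R || (intros x; auto_derive; auto; field; auto)).
    rewrite !sin_INR_mult_2PI, !cos_INR_mult_2PI, !Rmult_0_r, !sin_0, cos_0; field; auto.
Qed.

Lemma RInt_cos_sq_INR (n : nat) : n <> 0%nat ->
  Int2PI (fun x => cos (INR n * x) * cos (INR n * x)) = PI.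
Proof.
  intros Hn; assert (Hn0 : INR n <> 0) by (apply not_0_INR; auto).
  rewrite (RInt_derive_R (fun x => x / 2 + sin (INR n * x) * cos (INR n * x) / (2 * INR n))).
  - rewrite sin_INR_mult_2PI, Rmult_0_r, sin_0; field; auto.
  - intros x; auto_derive; auto.
    pose proof (sin2_cos2 (INR n * x)) as E; unfold Rsqr in E.
    replace (sin (INR n * x) * (INR n * 1 * - sin (INR n * x)))
      with (- INR n * (sin (INR n * x) * sin (INR n * x))) by ring.
    replace (sin (INR n * x) * sin (INR n * x)) with (1 - cos (INR n * x) * cos (INR n * x)) by lra.
    field; auto.
  - continuity_R.
Qed.

Lemma RInt_sin_sq_INR (n : nat) : n <> 0%nat ->
  Int2PI (fun x => sin (INR n * x) * sin (INR n * x)) = PI.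
Proof.
  intros Hn; assert (Hn0 : INR n <> 0) by (apply not_0_INR; auto).
  rewrite (RInt_derive_R (fun x => x / 2 - sin (INR n * x) * cos (INR n * x) / (2 * INR n))).
  - rewrite sin_INR_mult_2PI, Rmult_0_r, sin_0; field; auto.
  - intros x; auto_derive; auto.
    pose proof (sin2_cos2 (INR n * x)) as E; unfold Rsqr in E.
    replace (INR n * 1 * cos (INR n * x) * cos (INR n * x))
      with (INR n * (cos (INR n * x) * cos (INR n * x))) by ring.
    replace (cos (INR n * x) * cos (INR n * x)) with (1 - sin (INR n * x) * sin (INR n * x)) by lra.
    field; auto.
  - continuity_R.
Qed.

Lemma RInt_cos_INR (n : nat) : n <> 0%nat -> Int2PI (fun x => cos (INR n * x)) = 0.
Proof.
  intros Hn; assert (Hn0 : INR n <> 0) by (apply not_0_INR; auto).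
  rewrite (RInt_derive_R (fun x => sin (INR n * x) / INR n))
    by (continuity_R || (intros x; auto_derive; auto; field; auto)).
  rewrite sin_INR_mult_2PI, Rmult_0_r, sin_0; field; auto.
Qed.

Lemma RInt_sin_INR (n : nat) : Int2PI (fun x => sin (INR n * x)) = 0.
Proof.
  destruct (Nat.eq_dec n 0) as [->|Hn].
  - rewrite (RInt_ext_R _ (fun _ => 0)), RInt_const_R; [ring|].
    intros x; simpl; rewrite Rmult_0_l, sin_0; ring.
  - assert (Hn0 : INR n <> 0) by (apply not_0_INR; auto).
    rewrite (RInt_derive_R (fun x => - cos (INR n * x) / INR n))
      by (continuity_R || (intros x; auto_derive; auto; field; auto)).
    rewrite cos_INR_mult_2PI, Rmult_0_r, cos_0; field; auto.
Qed.

Lemma RInt_cos : Int2PI cos = 0.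
Proof.
  erewrite RInt_ext_R;
    [apply (RInt_cos_INR 1); lia | intros x; simpl; rewrite Rmult_1_l; reflexivity].
Qed.

Lemma RInt_sin : Int2PI sin = 0.
Proof.
  erewrite RInt_ext_R;
    [apply (RInt_sin_INR 1) | intros x; simpl; rewrite Rmult_1_l; reflexivity].
Qed.

Lemma RInt_cos_sq : Int2PI (fun x => cos x * cos x) = PI.
Proof.
  erewrite RInt_ext_R;
    [apply (RInt_cos_sq_INR 1); lia | intros x; simpl; rewrite Rmult_1_l; reflexivity].
Qed.

Lemma RInt_sin_sq : Int2PI (fun x => sin x * sin x) = PI.
Proof.
  erewrite RInt_ext_R;
    [apply (RInt_sin_sq_INR 1); lia | intros x; simpl; rewrite Rmult_1_l; reflexivity].
Qed.

Lemma RInt_sin_cos : Int2PI (fun x => sin x * cos x) = 0.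
Proof.
  erewrite RInt_ext_R;
    [apply (RInt_sin_cos_INR 1 1) | intros x; simpl; rewrite Rmult_1_l; reflexivity].
Qed.

(** * Fourier coefficients and Bessel's inequality *)

(* Unnormalised: [fourier_cos f n] is π times the usual coefficient a_n, and
   [fourier_partial f m] is π times the m-th partial Fourier sum without its constant term. *)
Definition fourier_cos (f : R -> R) (n : nat) : R := Int2PI (fun x => f x * cos (INR n * x)).
Definition fourier_sin (f : R -> R) (n : nat) : R := Int2PI (fun x => f x * sin (INR n * x)).

Lemma fourier_cos_0 (f : R -> R) : fourier_cos f 0 = Int2PI f.
Proof. apply RInt_ext_R; intros x; simpl; rewrite Rmult_0_l, cos_0; ring. Qed.

Lemma fourier_cos_1 (f : R -> R) : fourier_cos f 1 = Int2PI (fun x => f x * cos x).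
Proof. apply RInt_ext_R; intros x; simpl; rewrite Rmult_1_l; reflexivity. Qed.

Lemma fourier_sin_1 (f : R -> R) : fourier_sin f 1 = Int2PI (fun x => f x * sin x).
Proof. apply RInt_ext_R; intros x; simpl; rewrite Rmult_1_l; reflexivity. Qed.

Fixpoint fourier_partial (f : R -> R) (m : nat) (x : R) : R :=
  match m with
  | O => 0
  | S m' => fourier_partial f m' x
            + (fourier_cos f m * cos (INR m * x) + fourier_sin f m * sin (INR m * x))
  end.

Fixpoint fourier_energy (f : R -> R) (m : nat) : R :=
  match m with
  | O => 0
  | S m' => fourier_energy f m' + (fourier_cos f m ^ 2 + fourier_sin f m ^ 2)
  end.

Lemma continuous_R_fourier_partial (f : R -> R) (m : nat) : continuous_R (fourier_partial f m).
Proof. induction m; cbn [fourier_partial]; continuity_R. Qed.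

#[export] Hint Resolve continuous_R_fourier_partial : continuity_R.

Lemma RInt_fourier_partial_cos (f : R -> R) (m n : nat) : (m < n)%nat ->
  Int2PI (fun x => fourier_partial f m x * cos (INR n * x)) = 0.
Proof.
  induction m as [|m IH]; intros Hmn; cbn [fourier_partial].
  - rewrite (RInt_ext_R _ (fun _ => 0)), RInt_const_R; [ring | intros; ring].
  - rewrite (RInt_ext_R _ (fun x => fourier_partial f m x * cos (INR n * x)
      + fourier_cos f (S m) * (cos (INR (S m) * x) * cos (INR n * x))
      + fourier_sin f (S m) * (sin (INR (S m) * x) * cos (INR n * x)))) by (intros; ring).
    RInt_lin.
    rewrite IH, RInt_cos_cos_INR_neq, RInt_sin_cos_INR by lia; ring.
Qed.

Lemma RInt_fourier_partial_sin (f : R -> R) (m n : nat) : (m < n)%nat ->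
  Int2PI (fun x => fourier_partial f m x * sin (INR n * x)) = 0.
Proof.
  induction m as [|m IH]; intros Hmn; cbn [fourier_partial].
  - rewrite (RInt_ext_R _ (fun _ => 0)), RInt_const_R; [ring | intros; ring].
  - rewrite (RInt_ext_R _ (fun x => fourier_partial f m x * sin (INR n * x)
      + fourier_cos f (S m) * (sin (INR n * x) * cos (INR (S m) * x))
      + fourier_sin f (S m) * (sin (INR (S m) * x) * sin (INR n * x)))) by (intros; ring).
    RInt_lin.
    rewrite IH, RInt_sin_sin_INR_neq, RInt_sin_cos_INR by lia; ring.
Qed.

Lemma RInt_fourier_partial_sq (f : R -> R) (m : nat) :
  Int2PI (fun x => fourier_partial f m x ^ 2) = PI * fourier_energy f m.
Proof.
  induction m as [|m IH]; cbn [fourier_partial fourier_energy].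
  - rewrite (RInt_ext_R _ (fun _ => 0)), RInt_const_R; [ring | intros; ring].
  - set (a := fourier_cos f (S m)); set (b := fourier_sin f (S m)).
    rewrite (RInt_ext_R _ (fun x => fourier_partial f m x ^ 2
      + 2 * a * (fourier_partial f m x * cos (INR (S m) * x))
      + 2 * b * (fourier_partial f m x * sin (INR (S m) * x))
      + a ^ 2 * (cos (INR (S m) * x) * cos (INR (S m) * x))
      + b ^ 2 * (sin (INR (S m) * x) * sin (INR (S m) * x))
      + 2 * a * b * (sin (INR (S m) * x) * cos (INR (S m) * x)))) by (intros; ring).
    RInt_lin.
    rewrite IH, RInt_fourier_partial_cos, RInt_fourier_partial_sin,
      RInt_cos_sq_INR, RInt_sin_sq_INR, RInt_sin_cos_INR by lia.
    ring.
Qed.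

Lemma RInt_mul_fourier_partial (f : R -> R) (m : nat) : continuous_R f ->
  Int2PI (fun x => f x * fourier_partial f m x) = fourier_energy f m.
Proof.
  intros Hf; induction m as [|m IH]; cbn [fourier_partial fourier_energy].
  - rewrite (RInt_ext_R _ (fun _ => 0)), RInt_const_R; [ring | intros; ring].
  - rewrite (RInt_ext_R _ (fun x => f x * fourier_partial f m x
      + fourier_cos f (S m) * (f x * cos (INR (S m) * x))
      + fourier_sin f (S m) * (f x * sin (INR (S m) * x)))) by (intros; ring).
    RInt_lin.
    rewrite IH; fold (fourier_cos f (S m)) (fourier_sin f (S m)); ring.
Qed.

Lemma bessel_inequality (f : R -> R) (m : nat) : continuous_R f ->
  fourier_energy f m <= PI * Int2PI (fun x => f x ^ 2).
Proof.
  intros Hf; pose proof PI_RGT_0.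
  assert (Hsq : 0 <= Int2PI (fun x => (PI * f x - fourier_partial f m x) ^ 2)).
  { apply RInt_ge_0; [lra | apply ex_RInt_continuous_R; continuity_R | intros; apply pow2_ge_0]. }
  rewrite (RInt_ext_R _ (fun x => PI ^ 2 * f x ^ 2 - 2 * PI * (f x * fourier_partial f m x)
     + fourier_partial f m x ^ 2)) in Hsq by (intros; ring).
  RInt_lin_in Hsq.
  rewrite RInt_mul_fourier_partial, RInt_fourier_partial_sq in Hsq by auto.
  nra.
Qed.

Lemma fourier_derive (f f' : R -> R) (n : nat) :
  (forall x, is_derive f x (f' x)) -> continuous_R f' -> periodic f ->
  fourier_cos f' n = INR n * fourier_sin f n /\ fourier_sin f' n = - INR n * fourier_cos f n.
Proof.
  intros Hd Hc Hp.
  assert (Cf : continuous_R f) by (apply (continuous_R_derive f f'); auto).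
  assert (E0 : f (2 * PI) = f 0) by (rewrite <- (Hp 0), Rplus_0_l; auto).
  unfold fourier_cos, fourier_sin; split.
  - assert (E : Int2PI (fun x => f' x * cos (INR n * x) - INR n * (f x * sin (INR n * x)))
                = f (2 * PI) * cos (INR n * (2 * PI)) - f 0 * cos (INR n * 0)).
    { apply (RInt_derive_R (fun x => f x * cos (INR n * x))); [|continuity_R].
      intros x; auto_derive; [exists (f' x); auto|].
      rewrite (Derive_is_derive f f' x Hd); ring. }
    RInt_lin_in E.
    rewrite cos_INR_mult_2PI, Rmult_0_r, cos_0, E0 in E; lra.
  - assert (E : Int2PI (fun x => f' x * sin (INR n * x) + INR n * (f x * cos (INR n * x)))
                = f (2 * PI) * sin (INR n * (2 * PI)) - f 0 * sin (INR n * 0)).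
    { apply (RInt_derive_R (fun x => f x * sin (INR n * x))); [|continuity_R].
      intros x; auto_derive; [exists (f' x); auto|].
      rewrite (Derive_is_derive f f' x Hd); ring. }
    RInt_lin_in E.
    rewrite sin_INR_mult_2PI, !Rmult_0_r, sin_0 in E; lra.
Qed.

Lemma fourier_energy_derive (f f' : R -> R) (m : nat) :
  (forall x, is_derive f x (f' x)) -> continuous_R f' -> periodic f ->
  fourier_cos f 1 = 0 -> fourier_sin f 1 = 0 ->
  4 * fourier_energy f m <= fourier_energy f' m.
Proof.
  intros Hd Hc Hp Hc1 Hs1.
  induction m as [|m IH]; cbn [fourier_energy]; [lra|].
  destruct (fourier_derive f f' (S m) Hd Hc Hp) as [-> ->].
  destruct m as [|m].
  - rewrite Hc1, Hs1; simpl; lra.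
  - assert (Hn : 2 <= INR (S (S m))) by (rewrite !S_INR; pose proof (pos_INR m); lra).
    set (n := INR (S (S m))) in *.
    set (a := fourier_cos f (S (S m))); set (b := fourier_sin f (S (S m))).
    assert (Hab : 4 * (a ^ 2 + b ^ 2) <= n ^ 2 * (a ^ 2 + b ^ 2))
      by (apply Rmult_le_compat_r; [pose proof (pow2_ge_0 a); pose proof (pow2_ge_0 b) | ]; nra).
    replace ((n * b) ^ 2 + (- n * a) ^ 2) with (n ^ 2 * (a ^ 2 + b ^ 2)) by ring.
    lra.
Qed.

Lemma RInt_derive_mul_cos_sin (f f' : R -> R) :
  (forall x, is_derive f x (f' x)) -> continuous_R f' -> periodic f ->
  Int2PI (fun x => f' x * cos x) = Int2PI (fun x => f x * sin x)
  /\ Int2PI (fun x => f' x * sin x) = - Int2PI (fun x => f x * cos x).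
Proof.
  intros Hd Hc Hp; destruct (fourier_derive f f' 1 Hd Hc Hp) as [Ec Es].
  rewrite !fourier_cos_1, !fourier_sin_1 in *; simpl INR in *; split; lra.
Qed.

(** * Dirichlet and Fejér kernels *)

Fixpoint dirichlet (m : nat) (t : R) : R :=
  match m with
  | O => 1
  | S m' => dirichlet m' t + 2 * cos (INR m * t)
  end.

(* N+1 times the Fejér kernel. *)
Fixpoint fejer (N : nat) (t : R) : R :=
  match N with
  | O => 1
  | S N' => fejer N' t + dirichlet N t
  end.

Lemma continuous_R_dirichlet (m : nat) : continuous_R (dirichlet m).
Proof. induction m; cbn [dirichlet]; continuity_R. Qed.

#[export] Hint Resolve continuous_R_dirichlet : continuity_R.

Lemma continuous_R_fejer (N : nat) : continuous_R (fejer N).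
Proof. induction N; cbn [fejer]; continuity_R. Qed.

#[export] Hint Resolve continuous_R_fejer : continuity_R.

Lemma periodic_dirichlet (m : nat) : periodic (dirichlet m).
Proof.
  intros t; induction m as [|m IH]; cbn [dirichlet]; auto.
  rewrite IH; replace (INR (S m) * (t + 2 * PI)) with (INR (S m) * t + 2 * INR (S m) * PI) by ring.
  rewrite cos_period; auto.
Qed.

Lemma periodic_fejer (N : nat) : periodic (fejer N).
Proof. intros t; induction N; cbn [fejer]; rewrite ?IHN, ?periodic_dirichlet; auto. Qed.

Lemma dirichlet_opp (m : nat) (t : R) : dirichlet m (- t) = dirichlet m t.
Proof.
  induction m as [|m IH]; cbn [dirichlet]; auto.
  rewrite IH; replace (INR (S m) * - t) with (- (INR (S m) * t)) by ring.
  rewrite cos_neg; auto.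
Qed.

Lemma fejer_opp (N : nat) (t : R) : fejer N (- t) = fejer N t.
Proof. induction N; cbn [fejer]; rewrite ?IHN, ?dirichlet_opp; auto. Qed.

Lemma dirichlet_mul_one_minus_cos (m : nat) (t : R) :
  dirichlet m t * (1 - cos t) = cos (INR m * t) - cos (INR (S m) * t).
Proof.
  induction m as [|m IH]; cbn [dirichlet].
  - simpl INR; rewrite Rmult_0_l, !Rmult_1_l, cos_0; ring.
  - rewrite Rmult_plus_distr_r, IH, !S_INR.
    replace ((INR m + 1 + 1) * t) with ((INR m + 1) * t + t) by ring.
    replace (INR m * t) with ((INR m + 1) * t - t) by ring.
    rewrite cos_plus, cos_minus; ring.
Qed.

Lemma fejer_mul_one_minus_cos (N : nat) (t : R) :
  fejer N t * (1 - cos t) = 1 - cos (INR (S N) * t).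
Proof.
  induction N as [|N IH]; cbn [fejer].
  - simpl INR; rewrite !Rmult_1_l; ring.
  - rewrite Rmult_plus_distr_r, IH, dirichlet_mul_one_minus_cos; ring.
Qed.

Lemma fejer_nonneg (N : nat) (t : R) : cos t < 1 -> 0 <= fejer N t.
Proof.
  intros Ht; pose proof (fejer_mul_one_minus_cos N t); pose proof (COS_bound (INR (S N) * t)).
  destruct (Rle_or_lt 0 (fejer N t)); nra.
Qed.

Lemma RInt_dirichlet (m : nat) : Int2PI (dirichlet m) = 2 * PI.
Proof.
  induction m as [|m IH]; cbn [dirichlet].
  - rewrite RInt_const_R; ring.
  - rewrite (RInt_plus_R (dirichlet m)) by continuity_R.
    rewrite IH, RInt_scal_R, RInt_cos_INR by (lia || continuity_R); ring.
Qed.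

Lemma RInt_fejer (N : nat) : Int2PI (fejer N) = 2 * PI * INR (S N).
Proof.
  induction N as [|N IH]; cbn [fejer].
  - rewrite RInt_const_R; simpl; ring.
  - rewrite (RInt_plus_R (fejer N)), IH, RInt_dirichlet, (S_INR (S N)) by continuity_R; ring.
Qed.

Lemma RInt_one_minus_cos_mul_fejer (N : nat) :
  Int2PI (fun t => (1 - cos t) * fejer N t) = 2 * PI.
Proof.
  rewrite (RInt_ext_R _ (fun t => 1 - cos (INR (S N) * t)))
    by (intros t; rewrite <- fejer_mul_one_minus_cos; ring).
  rewrite RInt_minus_R, RInt_cos_INR, RInt_const_R by (lia || continuity_R); ring.
Qed.

Lemma RInt_mul_dirichlet (f : R -> R) (m : nat) (x : R) : continuous_R f ->
  Int2PI (fun y => f y * dirichlet m (x - y)) = fourier_cos f 0 + 2 * fourier_partial f m x.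
Proof.
  intros Hf; induction m as [|m IH]; cbn [dirichlet fourier_partial].
  - rewrite Rmult_0_r, Rplus_0_r; unfold fourier_cos.
    apply RInt_ext_R; intros y; simpl; rewrite Rmult_0_l, cos_0; ring.
  - rewrite (RInt_ext_R _ (fun y => f y * dirichlet m (x - y)
      + 2 * cos (INR (S m) * x) * (f y * cos (INR (S m) * y))
      + 2 * sin (INR (S m) * x) * (f y * sin (INR (S m) * y)))).
    + RInt_lin; rewrite IH; fold (fourier_cos f (S m)) (fourier_sin f (S m)); ring.
    + intros y; rewrite Rmult_minus_distr_l, cos_minus; ring.
Qed.

Lemma RInt_mul_fejer (f : R -> R) (N : nat) (x : R) : continuous_R f ->
  Int2PI (fun y => f y * fejer N (x - y))
  = sum_f_R0 (fun m => fourier_cos f 0 + 2 * fourier_partial f m x) N.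
Proof.
  intros Hf; induction N as [|N IH]; cbn [fejer sum_f_R0].
  - rewrite <- (RInt_mul_dirichlet f 0 x Hf); apply RInt_ext_R; intros y; simpl; ring.
  - rewrite <- IH, <- RInt_mul_dirichlet by auto.
    rewrite <- RInt_plus_R by continuity_R; apply RInt_ext_R; intros y; ring.
Qed.

(** * Wirtinger's inequality *)

Lemma sin_ge_third (u : R) : 0 <= u <= PI / 2 -> u / 3 <= sin u.
Proof.
  intros Hu; pose proof PI_4.
  destruct (SIN u) as [Hs _]; try lra.
  unfold sin_lb, sin_approx, sin_term in Hs; simpl in Hs.
  assert (Hrem : 0 <= u ^ 5 * (42 - u ^ 2)) by (apply Rmult_le_pos; [apply pow_le | ]; nra).
  nra.
Qed.

Lemma sq_le_one_minus_cos (t : R) : - PI <= t <= PI -> t ^ 2 <= 18 * (1 - cos t).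
Proof.
  intros Ht; replace (cos t) with (cos (2 * (t / 2))) by (f_equal; field).
  rewrite cos_2a_sin.
  destruct (Rle_or_lt 0 t).
  - pose proof (sin_ge_third (t / 2) ltac:(lra)); nra.
  - pose proof (sin_ge_third (- (t / 2)) ltac:(lra)); rewrite sin_neg in *; nra.
Qed.

Lemma taylor_remainder_bound (f f' f'' : R -> R) (M x t : R) :
  (forall y, is_derive f y (f' y)) -> (forall y, is_derive f' y (f'' y)) ->
  (forall z, Rabs (z - x) <= Rabs t -> Rabs (f'' z) <= M) ->
  Rabs (f (x - t) - f x + t * f' x) <= M * t ^ 2.
Proof.
  intros Hd Hd' HM.
  destruct (MVT_cor4 f f' x (Rabs t) (fun c _ => Hd c) (x - t)) as [c [Ec Hc]].
  { replace (x - t - x) with (- t) by ring; rewrite Rabs_Ropp; lra. }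
  replace (x - t - x) with (- t) in Ec, Hc by ring; rewrite Rabs_Ropp in Hc.
  destruct (MVT_cor4 f' f'' x (Rabs t) (fun d _ => Hd' d) c Hc) as [d [Ed Hd'']].
  replace (f (x - t) - f x + t * f' x) with (- t * (f'' d * (c - x)))
    by (rewrite Ec; replace (f' c) with (f' x + f'' d * (c - x)) by lra; ring).
  rewrite !Rabs_mult, Rabs_Ropp, <- (pow2_abs t).
  pose proof (HM d ltac:(lra)); pose proof (Rabs_pos t); pose proof (Rabs_pos (f'' d)).
  pose proof (Rabs_pos (c - x)).
  assert (Rabs (f'' d) * Rabs (c - x) <= M * Rabs t) by (apply Rmult_le_compat; lra).
  nra.
Qed.

Lemma RInt_odd_R (g : R -> R) (a : R) : continuous_R g -> (forall t, g (- t) = - g t) ->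
  RInt g (- a) a = 0 :> R.
Proof.
  intros Hg Hodd.
  assert (E := RInt_comp_opp_R g 0 (- a) a Hg).
  rewrite (RInt_ext_R _ (fun t => - g t)) in E
    by (intros t; rewrite <- Hodd; f_equal; ring).
  rewrite RInt_opp_R in E by auto.
  replace (0 - a) with (- a) in E by ring; replace (0 - - a) with a in E by ring.
  lra.
Qed.

Lemma RInt_conv_centered (f K : R -> R) (x : R) :
  continuous_R f -> continuous_R K -> periodic f -> periodic K ->
  Int2PI (fun y => f y * K (x - y)) = RInt (fun t => f (x - t) * K t) (- PI) PI.
Proof.
  intros Hf HK Pf PK.
  set (g := fun t => f (x - t) * K t).
  assert (Pg : periodic g).
  { intros t; unfold g; rewrite PK; f_equal.
    rewrite <- (Pf (x - (t + 2 * PI))); f_equal; ring. }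
  rewrite (RInt_ext_R _ (fun y => g (x - y))) by (intros y; unfold g; do 2 f_equal; ring).
  rewrite RInt_comp_opp_R by (unfold g; continuity_R).
  rewrite RInt_periodic_centered by (unfold g; continuity_R || auto).
  replace (x - 0) with (x - 2 * PI + 2 * PI) by ring.
  apply RInt_periodic_interval; [unfold g; continuity_R | auto].
Qed.

Lemma taylor_remainder_mul_fejer (f f' f'' : R -> R) (M : R) (N : nat) (x t : R) :
  (forall y, is_derive f y (f' y)) -> (forall y, is_derive f' y (f'' y)) ->
  (forall z, Rabs (z - x) <= PI -> Rabs (f'' z) <= M) -> - PI < t < PI ->
  Rabs ((f (x - t) - f x + t * f' x) * fejer N t) <= 18 * M * ((1 - cos t) * fejer N t).
Proof.
  intros Hd Hd' HM Ht.
  destruct (Req_dec t 0) as [->|Ht0].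
  { rewrite cos_0, Rminus_0_r; replace (f x - f x + 0 * f' x) with 0 by ring.
    rewrite Rmult_0_l, Rabs_R0; lra. }
  assert (M0 : 0 <= M).
  { specialize (HM x); rewrite Rminus_diag, Rabs_R0 in HM; pose proof (Rabs_pos (f'' x)).
    pose proof PI_RGT_0; lra. }
  pose proof (sq_le_one_minus_cos t ltac:(lra)); pose proof (pow2_gt_0 t Ht0).
  assert (G0 : 0 <= fejer N t) by (apply fejer_nonneg; lra).
  assert (Hr : Rabs (f (x - t) - f x + t * f' x) <= M * t ^ 2).
  { apply (taylor_remainder_bound f f' f''); auto.
    intros z Hz; apply HM; pose proof (Rabs_le t PI ltac:(lra)); pose proof (Rabs_pos t); lra. }
  rewrite Rabs_mult, (Rabs_right (fejer N t)) by lra.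
  replace (18 * M * ((1 - cos t) * fejer N t)) with (18 * M * (1 - cos t) * fejer N t) by ring.
  apply Rmult_le_compat_r; nra.
Qed.

Lemma fejer_conv_approx (f f' f'' : R -> R) (M : R) (N : nat) (x : R) :
  (forall y, is_derive f y (f' y)) -> (forall y, is_derive f' y (f'' y)) ->
  (forall z, Rabs (z - x) <= PI -> Rabs (f'' z) <= M) ->
  Rabs (RInt (fun t => f (x - t) * fejer N t) (- PI) PI - 2 * PI * INR (S N) * f x)
  <= 36 * PI * M.
Proof.
  intros Hd Hd' HM; pose proof PI_RGT_0.
  assert (Cf : continuous_R f) by (apply (continuous_R_derive f f'); auto).
  set (r := fun t => (f (x - t) - f x + t * f' x) * fejer N t).
  assert (E : RInt (fun t => f (x - t) * fejer N t) (- PI) PI - 2 * PI * INR (S N) * f x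
              = RInt r (- PI) PI :> R).
  { rewrite (RInt_ext_R r
      (fun t => f (x - t) * fejer N t - f x * fejer N t + f' x * (t * fejer N t)))
      by (intros t; unfold r; ring).
    RInt_lin.
    rewrite (RInt_odd_R (fun t => t * fejer N t)), (RInt_periodic_centered (fejer N)), RInt_fejer
      by (continuity_R || apply periodic_fejer || (intros t; cbv beta; rewrite fejer_opp; ring)).
    ring. }
  rewrite E.
  apply Rle_trans with (RInt (fun t => 18 * M * ((1 - cos t) * fejer N t)) (- PI) PI).
  - eapply Rle_trans; [apply abs_RInt_le; [lra | apply ex_RInt_continuous_R; unfold r; continuity_R]|].
    apply RInt_le; [lra | apply ex_RInt_continuous_R; unfold r; continuity_R
                   | apply ex_RInt_continuous_R; continuity_R |].
    intros t Ht; apply (taylor_remainder_mul_fejer f f' f''); auto.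
  - rewrite RInt_scal_R, RInt_periodic_centered, RInt_one_minus_cos_mul_fejer by
      (continuity_R || (intros t; rewrite cos_periodic, periodic_fejer; auto)).
    lra.
Qed.

Lemma fejer_quadratic_upper (f f' : R -> R) (N : nat) :
  (forall x, is_derive f x (f' x)) -> continuous_R f' -> periodic f ->
  fourier_cos f 0 = 0 -> fourier_cos f 1 = 0 -> fourier_sin f 1 = 0 ->
  Int2PI (fun x => f x * Int2PI (fun y => f y * fejer N (x - y)))
  <= INR (S N) * (PI / 2 * Int2PI (fun x => f' x ^ 2)).
Proof.
  intros Hd Hc' Hp H0 H1 H1'.
  assert (Hc : continuous_R f) by (apply (continuous_R_derive f f'); auto).
  rewrite (RInt_ext_R _ (fun x => sum_f_R0 (fun m => 2 * (f x * fourier_partial f m x)) N)).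
  2: { intros x; rewrite RInt_mul_fejer, H0, scal_sum by auto.
       apply sum_eq; intros; ring. }
  rewrite RInt_sum_R by (intros; continuity_R).
  rewrite (Rmult_comm (INR (S N))), <- sum_cte.
  apply sum_Rle; intros m _.
  rewrite RInt_scal_R, RInt_mul_fourier_partial by (auto || continuity_R).
  pose proof (fourier_energy_derive f f' m Hd Hc' Hp H1 H1').
  pose proof (bessel_inequality f' m Hc'); lra.
Qed.

Lemma fejer_quadratic_lower (f f' f'' : R -> R) (M Mf : R) (N : nat) :
  (forall x, is_derive f x (f' x)) -> (forall x, is_derive f' x (f'' x)) -> periodic f ->
  (forall z, - PI <= z <= 3 * PI -> Rabs (f'' z) <= M) ->
  (forall z, 0 <= z <= 2 * PI -> Rabs (f z) <= Mf) ->
  2 * PI * INR (S N) * Int2PI (fun x => f x ^ 2) - 2 * PI * (36 * PI * M * Mf)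
  <= Int2PI (fun x => f x * Int2PI (fun y => f y * fejer N (x - y))).
Proof.
  intros Hd Hd' Hp HM HMf; pose proof PI_RGT_0.
  assert (Hc : continuous_R f) by (apply (continuous_R_derive f f'); auto).
  assert (Hpt : forall x, 0 < x < 2 * PI ->
    2 * PI * INR (S N) * f x ^ 2 - 36 * PI * M * Mf
    <= f x * Int2PI (fun y => f y * fejer N (x - y))).
  { intros x Hx.
    rewrite RInt_conv_centered by (auto || continuity_R || apply periodic_fejer).
    assert (HA : Rabs (RInt (fun t => f (x - t) * fejer N t) (- PI) PI
                       - 2 * PI * INR (S N) * f x) <= 36 * PI * M).
    { apply (fejer_conv_approx f f' f''); auto.
      intros z Hz; apply HM; apply Rabs_le_between' in Hz; lra. }
    set (J := RInt (fun t => f (x - t) * fejer N t) (- PI) PI) in *.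
    assert (HD : Rabs (f x * (J - 2 * PI * INR (S N) * f x)) <= Mf * (36 * PI * M)).
    { rewrite Rabs_mult.
      apply Rmult_le_compat; [apply Rabs_pos | apply Rabs_pos | apply HMf; lra | exact HA]. }
    pose proof (Rle_abs (- (f x * (J - 2 * PI * INR (S N) * f x)))) as Hneg.
    rewrite Rabs_Ropp in Hneg; lra. }
  apply Rle_trans with (Int2PI (fun x => 2 * PI * INR (S N) * f x ^ 2 - 36 * PI * M * Mf)).
  { rewrite RInt_minus_R, RInt_scal_R, RInt_const_R by continuity_R; lra. }
  apply RInt_le; [lra | apply ex_RInt_continuous_R; continuity_R | | exact Hpt].
  apply (ex_RInt_ext
    (fun x => f x * sum_f_R0 (fun m => fourier_cos f 0 + 2 * fourier_partial f m x) N)).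
  - intros x _; rewrite RInt_mul_fejer; auto.
  - apply ex_RInt_continuous_R; continuity_R.
Qed.

Lemma nonpos_of_bounded_multiples (d C : R) : (forall N, INR (S N) * d <= C) -> d <= 0.
Proof.
  intros HN; destruct (Rle_or_lt d 0) as [|Hd]; auto.
  destruct (INR_archimed d C Hd) as [n Hn].
  specialize (HN n); rewrite S_INR in HN; lra.
Qed.

Theorem wirtinger_inequality (f f' f'' : R -> R) :
  (forall x, is_derive f x (f' x)) -> (forall x, is_derive f' x (f'' x)) -> continuous_R f'' ->
  periodic f -> fourier_cos f 0 = 0 -> fourier_cos f 1 = 0 -> fourier_sin f 1 = 0 ->
  4 * Int2PI (fun x => f x ^ 2) <= Int2PI (fun x => f' x ^ 2).
Proof.
  intros Hd Hd' Hc'' Hp H0 H1 H1'; pose proof PI_RGT_0.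
  assert (Hc' : continuous_R f') by (apply (continuous_R_derive f' f''); auto).
  assert (Hc : continuous_R f) by (apply (continuous_R_derive f f'); auto).
  destruct (continuous_R_bounded f'' (- PI) (3 * PI) ltac:(lra) Hc'') as [M HM].
  destruct (continuous_R_bounded f 0 (2 * PI) ltac:(lra) Hc) as [Mf HMf].
  assert (Hd0 : 2 * PI * Int2PI (fun x => f x ^ 2) - PI / 2 * Int2PI (fun x => f' x ^ 2) <= 0).
  { apply (nonpos_of_bounded_multiples _ (2 * PI * (36 * PI * M * Mf))); intros N.
    pose proof (fejer_quadratic_upper f f' N Hd Hc' Hp H0 H1 H1').
    pose proof (fejer_quadratic_lower f f' f'' M Mf N Hd Hd' Hp HM HMf).
    lra. }
  apply Rmult_le_reg_l with (PI / 2); lra.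
Qed.

(** * Averages over the rotations by multiples of 2π/k *)

Definition rot_avg (k : nat) (p : R -> R) (s : R) : R :=
  / INR k * sum_f_R0 (fun j => p (s + 2 * PI * INR j / INR k)) (k - 1).

Lemma continuous_R_rot_avg (k : nat) (p : R -> R) : continuous_R p -> continuous_R (rot_avg k p).
Proof. intros Hp; unfold rot_avg; continuity_R. Qed.

#[export] Hint Resolve continuous_R_rot_avg : continuity_R.

Lemma periodic_rot_avg (k : nat) (p : R -> R) : periodic p -> periodic (rot_avg k p).
Proof.
  intros Hp s; unfold rot_avg; f_equal; apply sum_eq; intros j _.
  rewrite <- (Hp (s + 2 * PI * INR j / INR k)); f_equal; ring.
Qed.

Lemma is_derive_rot_avg (k : nat) (p p' : R -> R) (x : R) :
  (forall y, is_derive p y (p' y)) -> is_derive (rot_avg k p) x (rot_avg k p' x).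
Proof.
  intros Hd; unfold rot_avg; apply is_derive_scal.
  induction (k - 1)%nat as [|n IH]; simpl.
  - auto_derive; [exists (p' (x + 2 * PI * 0 / INR k)); apply Hd|].
    rewrite (Derive_is_derive p p' _ Hd); ring.
  - apply (is_derive_plus (fun y => sum_f_R0 (fun j => p (y + 2 * PI * INR j / INR k)) n)); auto.
    auto_derive; [exists (p' (x + 2 * PI * INR (S n) / INR k)); apply Hd|].
    rewrite (Derive_is_derive p p' _ Hd); ring.
Qed.

Lemma RInt_rot_avg (k : nat) (p : R -> R) : (0 < k)%nat -> continuous_R p -> periodic p ->
  Int2PI (rot_avg k p) = Int2PI p.
Proof.
  intros Hk Hc Hp; unfold rot_avg.
  rewrite RInt_scal_R, RInt_sum_R by (intros; continuity_R).
  rewrite (sum_eq _ (fun _ => Int2PI p)) by (intros j _; apply RInt_periodic_translate; auto).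
  rewrite sum_cte; replace (S (k - 1)) with k by lia.
  field; apply not_0_INR; lia.
Qed.

Lemma rot_avg_shift (k : nat) (p : R -> R) (s : R) : (0 < k)%nat -> periodic p ->
  rot_avg k p (s + 2 * PI / INR k) = rot_avg k p s.
Proof.
  intros Hk Hp; assert (Hk0 : INR k <> 0) by (apply not_0_INR; lia).
  unfold rot_avg; f_equal.
  pose proof (tech5 (fun j => p (s + 2 * PI * INR j / INR k)) (k - 1)) as Hlast.
  pose proof (decomp_sum (fun j => p (s + 2 * PI * INR j / INR k)) k ltac:(lia)) as Hfirst.
  replace (S (k - 1)) with k in Hlast by lia; replace (Nat.pred k) with (k - 1)%nat in Hfirst by lia.
  cbv beta in Hfirst.
  replace (s + 2 * PI * INR k / INR k) with (s + 2 * PI) in Hlast by (field; auto).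
  replace (s + 2 * PI * INR 0 / INR k) with s in Hfirst by (simpl; field; auto).
  rewrite Hp in Hlast.
  rewrite (sum_eq _ (fun j => p (s + 2 * PI * INR (S j) / INR k)))
    by (intros j _; f_equal; rewrite S_INR; field; auto).
  lra.
Qed.

Lemma rot_avg_shift_INR (k : nat) (p : R -> R) (s : R) (j : nat) : (0 < k)%nat -> periodic p ->
  rot_avg k p (s + 2 * PI * INR j / INR k) = rot_avg k p s.
Proof.
  intros Hk Hp; assert (Hk0 : INR k <> 0) by (apply not_0_INR; lia).
  induction j as [|j IH].
  - replace (s + 2 * PI * INR 0 / INR k) with s by (simpl; field; auto); reflexivity.
  - rewrite <- IH, <- (rot_avg_shift k p (s + 2 * PI * INR j / INR k)) by auto.
    f_equal; rewrite S_INR; field; auto.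
Qed.

Lemma rot_avg_idem (k : nat) (p : R -> R) (s : R) : (0 < k)%nat -> periodic p ->
  rot_avg k (rot_avg k p) s = rot_avg k p s.
Proof.
  intros Hk Hp; assert (Hk0 : INR k <> 0) by (apply not_0_INR; lia).
  unfold rot_avg at 1.
  rewrite (sum_eq _ (fun _ => rot_avg k p s)) by (intros j _; apply rot_avg_shift_INR; auto).
  rewrite sum_cte; replace (S (k - 1)) with k by lia; field; auto.
Qed.

(* Reindexing j ↦ k−1−j turns the backward average into the forward one shifted by 2π/k. *)
Lemma rot_avg_reflect (k : nat) (q : R -> R) (s : R) : (0 < k)%nat -> periodic q ->
  / INR k * sum_f_R0 (fun j => q (s - 2 * PI * INR j / INR k)) (k - 1) = rot_avg k q s.
Proof.
  intros Hk Hq; assert (Hk0 : INR k <> 0) by (apply not_0_INR; lia).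
  rewrite <- (rot_avg_shift k q) by auto; unfold rot_avg; f_equal.
  rewrite <- sum_f_R0_skip; apply sum_eq; intros j Hj.
  rewrite minus_INR, minus_INR by lia.
  rewrite <- (Hq (s - 2 * PI * (INR k - INR 1 - INR j) / INR k)); f_equal.
  simpl; field; auto.
Qed.

Lemma RInt_rot_avg_mul (k : nat) (p q : R -> R) : (0 < k)%nat ->
  continuous_R p -> continuous_R q -> periodic p -> periodic q ->
  Int2PI (fun s => rot_avg k p s * q s) = Int2PI (fun s => p s * rot_avg k q s).
Proof.
  intros Hk Cp Cq Pp Pq.
  rewrite (RInt_ext_R (fun s => p s * rot_avg k q s)
    (fun s => / INR k * sum_f_R0 (fun j => p s * q (s - 2 * PI * INR j / INR k)) (k - 1))).
  2: { intros s; rewrite <- (rot_avg_reflect k q s) by auto.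
       rewrite <- Rmult_assoc, (Rmult_comm (p s)), Rmult_assoc, scal_sum.
       f_equal; apply sum_eq; intros; ring. }
  unfold rot_avg.
  rewrite (RInt_ext_R _
    (fun s => / INR k * sum_f_R0 (fun j => p (s + 2 * PI * INR j / INR k) * q s) (k - 1))).
  2: { intros s; rewrite Rmult_assoc, (Rmult_comm _ (q s)), scal_sum; auto. }
  rewrite !RInt_scal_R, !RInt_sum_R by (intros; continuity_R).
  f_equal; apply sum_eq; intros j _.
  set (t := 2 * PI * INR j / INR k).
  rewrite <- (RInt_periodic_translate (fun s => p s * q (s - t)) t)
    by (continuity_R || (intros s; cbv beta; rewrite Pp, <- (Pq (s - t)); f_equal; f_equal; ring)).
  apply RInt_ext_R; intros s; do 2 f_equal; ring.
Qed.

Lemma rot_avg_cos_expand (k : nat) (s : R) :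
  rot_avg k cos s = cos s * rot_avg k cos 0 - sin s * rot_avg k sin 0.
Proof.
  unfold rot_avg.
  rewrite (sum_eq _ (fun j => cos (0 + 2 * PI * INR j / INR k) * cos s
                              - sin (0 + 2 * PI * INR j / INR k) * sin s))
    by (intros j _; rewrite Rplus_0_l, cos_plus; ring).
  rewrite minus_sum, <- !scal_sum; ring.
Qed.

Lemma rot_avg_sin_expand (k : nat) (s : R) :
  rot_avg k sin s = sin s * rot_avg k cos 0 + cos s * rot_avg k sin 0.
Proof.
  unfold rot_avg.
  rewrite (sum_eq _ (fun j => cos (0 + 2 * PI * INR j / INR k) * sin s
                              + sin (0 + 2 * PI * INR j / INR k) * cos s))
    by (intros j _; rewrite Rplus_0_l, sin_plus; ring).
  rewrite plus_sum, <- !scal_sum; ring.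
Qed.

(* The vector (C, S) of the two averages at 0 is fixed by the rotation by 2π/k, which is not
   the identity for k ≥ 2. *)
Lemma rot_avg_cos_sin_0 (k : nat) : (2 <= k)%nat -> rot_avg k cos 0 = 0 /\ rot_avg k sin 0 = 0.
Proof.
  intros Hk; pose proof PI_RGT_0.
  assert (Hk' : 2 <= INR k) by (replace 2 with (INR 2) by (simpl; ring); apply le_INR; auto).
  assert (Hc1 : cos (2 * PI / INR k) < 1).
  { rewrite <- cos_0; apply cos_decreasing_1; try lra.
    - apply Rlt_le, Rdiv_lt_0_compat; lra.
    - apply Rmult_le_reg_r with (INR k); [lra|]; field_simplify; nra.
    - apply Rdiv_lt_0_compat; lra. }
  pose proof (sin2_cos2 (2 * PI / INR k)) as Hcs; unfold Rsqr in Hcs.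
  pose proof (rot_avg_shift k cos 0 ltac:(lia) cos_periodic) as Ec.
  pose proof (rot_avg_shift k sin 0 ltac:(lia) sin_periodic) as Es.
  rewrite Rplus_0_l, rot_avg_cos_expand in Ec; rewrite Rplus_0_l, rot_avg_sin_expand in Es.
  set (C := rot_avg k cos 0) in *; set (S := rot_avg k sin 0) in *.
  assert (Hprod : (cos (2 * PI / INR k) - 1) * (C * C + S * S) = 0) by nra.
  assert (C * C + S * S = 0) by (apply Rmult_integral in Hprod; destruct Hprod; lra).
  split; nra.
Qed.

Lemma rot_avg_cos (k : nat) (s : R) : (2 <= k)%nat -> rot_avg k cos s = 0.
Proof.
  intros Hk; destruct (rot_avg_cos_sin_0 k Hk) as [Hc Hs].
  rewrite rot_avg_cos_expand, Hc, Hs; ring.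
Qed.

Lemma rot_avg_sin (k : nat) (s : R) : (2 <= k)%nat -> rot_avg k sin s = 0.
Proof.
  intros Hk; destruct (rot_avg_cos_sin_0 k Hk) as [Hc Hs].
  rewrite rot_avg_sin_expand, Hc, Hs; ring.
Qed.

Lemma RInt_rot_avg_mul_cos (k : nat) (p : R -> R) : (2 <= k)%nat -> continuous_R p -> periodic p ->
  Int2PI (fun s => rot_avg k p s * cos s) = 0.
Proof.
  intros Hk Cp Pp.
  rewrite RInt_rot_avg_mul by (lia || continuity_R || auto using cos_periodic).
  rewrite (RInt_ext_R _ (fun _ => 0)) by (intros s; rewrite rot_avg_cos by auto; ring).
  rewrite RInt_const_R; ring.
Qed.

Lemma RInt_rot_avg_mul_sin (k : nat) (p : R -> R) : (2 <= k)%nat -> continuous_R p -> periodic p ->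
  Int2PI (fun s => rot_avg k p s * sin s) = 0.
Proof.
  intros Hk Cp Pp.
  rewrite RInt_rot_avg_mul by (lia || continuity_R || auto using sin_periodic).
  rewrite (RInt_ext_R _ (fun _ => 0)) by (intros s; rewrite rot_avg_sin by auto; ring).
  rewrite RInt_const_R; ring.
Qed.

Lemma RInt_rot_avg_sq (k : nat) (p : R -> R) : (0 < k)%nat -> continuous_R p -> periodic p ->
  Int2PI (fun s => rot_avg k p s ^ 2) = Int2PI (fun s => p s * rot_avg k p s).
Proof.
  intros Hk Cp Pp.
  rewrite (RInt_ext_R _ (fun s => rot_avg k p s * rot_avg k p s)) by (intros; ring).
  rewrite RInt_rot_avg_mul by (auto || continuity_R || apply periodic_rot_avg; auto).
  apply RInt_ext_R; intros s; rewrite rot_avg_idem; auto.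
Qed.

Lemma RInt_sq_rot_avg_residual (k : nat) (p : R -> R) (a b : R) :
  (2 <= k)%nat -> continuous_R p -> periodic p ->
  Int2PI (fun s => (p s - rot_avg k p s - a * cos s - b * sin s) ^ 2)
  = Int2PI (fun s => p s ^ 2) - Int2PI (fun s => rot_avg k p s ^ 2)
    - 2 * a * Int2PI (fun s => p s * cos s) - 2 * b * Int2PI (fun s => p s * sin s)
    + PI * (a ^ 2 + b ^ 2).
Proof.
  intros Hk Cp Pp.
  rewrite (RInt_ext_R _ (fun s => p s ^ 2 + rot_avg k p s ^ 2 - 2 * (p s * rot_avg k p s)
     - 2 * a * (p s * cos s) - 2 * b * (p s * sin s)
     + 2 * a * (rot_avg k p s * cos s) + 2 * b * (rot_avg k p s * sin s)
     + a ^ 2 * (cos s * cos s) + b ^ 2 * (sin s * sin s) + 2 * a * b * (sin s * cos s)))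
    by (intros; ring).
  RInt_lin.
  rewrite RInt_rot_avg_mul_cos, RInt_rot_avg_mul_sin, RInt_cos_sq, RInt_sin_sq, RInt_sin_cos,
    <- (RInt_rot_avg_sq k p) by (lia || auto).
  ring.
Qed.

(** * Length, area and the order preserving set *)

Lemma is_derive_curve (h h' h'' : R -> R) (s : R) :
  (forall x, is_derive h x (h' x)) -> (forall x, is_derive h' x (h'' x)) ->
  is_derive (curve_x h) s (- (h s + h'' s) * sin s)
  /\ is_derive (curve_y h) s ((h s + h'' s) * cos s).
Proof.
  intros Hd Hd'.
  assert (E : forall x, Derive h x = h' x) by (intros; apply is_derive_unique, Hd).
  split.
  - apply (is_derive_ext (fun x => h x * cos x - h' x * sin x));
      [intros x; unfold curve_x; rewrite E; auto|].
    auto_derive; [repeat split; [exists (h' s) | exists (h'' s)]; auto|].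
    rewrite (Derive_is_derive h h' s Hd), (Derive_is_derive h' h'' s Hd'); ring.
  - apply (is_derive_ext (fun x => h x * sin x + h' x * cos x));
      [intros x; unfold curve_y; rewrite E; auto|].
    auto_derive; [repeat split; [exists (h' s) | exists (h'' s)]; auto|].
    rewrite (Derive_is_derive h h' s Hd), (Derive_is_derive h' h'' s Hd'); ring.
Qed.

Lemma oval_length_support (h h' h'' : R -> R) :
  (forall x, is_derive h x (h' x)) -> (forall x, is_derive h' x (h'' x)) ->
  continuous_R h'' -> periodic h -> (forall s, 0 < h s + h'' s) ->
  oval_length h = Int2PI h.
Proof.
  intros Hd Hd' Hc'' Hp Hpos.
  assert (Hc : continuous_R h) by (apply (continuous_R_derive h h'); auto).
  unfold oval_length; rewrite (RInt_ext_R _ (fun s => h s + h'' s)).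
  - rewrite RInt_plus_R, (RInt_derive_R h' h'') by auto.
    rewrite <- (periodic_derive h h' Hd Hp 0), Rplus_0_l; ring.
  - intros s; destruct (is_derive_curve h h' h'' s Hd Hd') as [Dx Dy].
    rewrite (is_derive_unique _ _ _ Dx), (is_derive_unique _ _ _ Dy).
    pose proof (sin2_cos2 s) as Hsc; unfold Rsqr in Hsc.
    replace ((- (h s + h'' s) * sin s) ^ 2 + ((h s + h'' s) * cos s) ^ 2)
      with ((h s + h'' s) ^ 2 * (sin s * sin s + cos s * cos s)) by ring.
    rewrite Hsc, Rmult_1_r, sqrt_pow2; [| specialize (Hpos s)]; lra.
Qed.

Lemma oval_area_support (h h' h'' : R -> R) :
  (forall x, is_derive h x (h' x)) -> (forall x, is_derive h' x (h'' x)) ->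
  continuous_R h'' -> periodic h ->
  oval_area h = / 2 * (Int2PI (fun s => h s ^ 2) - Int2PI (fun s => h' s ^ 2)).
Proof.
  intros Hd Hd' Hc'' Hp.
  assert (Hc' : continuous_R h') by (apply (continuous_R_derive h' h''); auto).
  assert (Hc : continuous_R h) by (apply (continuous_R_derive h h'); auto).
  assert (E : forall x, Derive h x = h' x) by (intros; apply is_derive_unique, Hd).
  assert (Hparts : Int2PI (fun s => h' s ^ 2 + h s * h'' s) = 0).
  { rewrite (RInt_derive_R (fun s => h s * h' s)).
    - rewrite <- (periodic_derive h h' Hd Hp 0), <- (Hp 0), Rplus_0_l; ring.
    - intros x; auto_derive; [repeat split; [exists (h' x) | exists (h'' x)]; auto|].
      rewrite (Derive_is_derive h h' x Hd), (Derive_is_derive h' h'' x Hd'); ring.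
    - continuity_R. }
  unfold oval_area; f_equal.
  rewrite (RInt_ext_R _ (fun s => h s ^ 2 + h s * h'' s)).
  - rewrite RInt_plus_R in Hparts |- * by continuity_R; lra.
  - intros s; destruct (is_derive_curve h h' h'' s Hd Hd') as [Dx Dy].
    rewrite (is_derive_unique _ _ _ Dx), (is_derive_unique _ _ _ Dy).
    unfold curve_x, curve_y; rewrite E.
    pose proof (sin2_cos2 s) as Hsc; unfold Rsqr in Hsc.
    transitivity (h s * (h s + h'' s) * (sin s * sin s + cos s * cos s)); [ring | rewrite Hsc; ring].
Qed.

Lemma ops_plus_disk_support_eq (k : nat) (h : R -> R) (s : R) :
  ops_plus_disk_support k h s = rot_avg k h s + a1 h * cos s + b1 h * sin s.
Proof.
  unfold ops_plus_disk_support, steiner_disk_support, a0.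
  change (ops_support k h s) with (rot_avg k h s - / 2 * avg_width h); field.
Qed.

Lemma RInt_mul_cos_a1 (h : R -> R) : Int2PI (fun s => h s * cos s) = PI * a1 h.
Proof.
  pose proof PI_RGT_0; unfold a1.
  rewrite <- Rmult_assoc, Rinv_r, Rmult_1_l by lra; reflexivity.
Qed.

Lemma RInt_mul_sin_b1 (h : R -> R) : Int2PI (fun s => h s * sin s) = PI * b1 h.
Proof.
  pose proof PI_RGT_0; unfold b1.
  rewrite <- Rmult_assoc, Rinv_r, Rmult_1_l by lra; reflexivity.
Qed.

Section OrderPreservingSet.

Variables (k : nat) (h h' h'' : R -> R).
Hypothesis k_ge_2 : (2 <= k)%nat.
Hypothesis h_derive : forall x, is_derive h x (h' x).
Hypothesis h'_derive : forall x, is_derive h' x (h'' x).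
Hypothesis h''_cont : continuous_R h''.
Hypothesis h_periodic : periodic h.

Let h'_cont : continuous_R h' := continuous_R_derive h' h'' h'_derive.
Let h_cont : continuous_R h := continuous_R_derive h h' h_derive.
Let h'_periodic : periodic h' := periodic_derive h h' h_derive h_periodic.

Lemma is_derive_rot_avg_sub (c x : R) :
  is_derive (fun s => rot_avg k h s - c) x (rot_avg k h' x).
Proof.
  auto_derive; [exists (rot_avg k h' x); apply is_derive_rot_avg; auto|].
  rewrite (Derive_is_derive (rot_avg k h) (rot_avg k h') x)
    by (intros; apply is_derive_rot_avg; auto).
  ring.
Qed.

Lemma ops_area_eq : ops_area k h =
  / 2 * (Int2PI (fun s => (rot_avg k h s - a0 h) ^ 2) - Int2PI (fun s => rot_avg k h' s ^ 2)).
Proof.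
  unfold ops_area; f_equal; rewrite <- RInt_minus_R by continuity_R.
  apply RInt_ext_R; intros s.
  change (ops_support k h) with (fun x => rot_avg k h x - / 2 * avg_width h).
  rewrite (is_derive_unique _ s _ (is_derive_rot_avg_sub _ s)).
  unfold a0; cbv beta; f_equal; f_equal; field.
Qed.

Lemma ops_area_expand : 4 * PI * ops_area k h =
  2 * PI * (Int2PI (fun s => rot_avg k h s ^ 2) - Int2PI (fun s => rot_avg k h' s ^ 2))
  - Int2PI h ^ 2.
Proof.
  pose proof PI_RGT_0.
  rewrite ops_area_eq.
  rewrite (RInt_ext_R _ (fun s => rot_avg k h s ^ 2 - 2 * a0 h * rot_avg k h s + a0 h ^ 2))
    by (intros; ring).
  RInt_lin; rewrite RInt_rot_avg, RInt_const_R by (lia || auto).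
  unfold a0, avg_width; field; lra.
Qed.

Lemma ops_area_nonpos : ops_area k h <= 0.
Proof.
  assert (W := wirtinger_inequality (fun s => rot_avg k h s - a0 h) (rot_avg k h') (rot_avg k h'')).
  rewrite ops_area_eq.
  assert (Hpos : 0 <= Int2PI (fun s => rot_avg k h' s ^ 2)).
  { apply RInt_ge_0; [pose proof PI_RGT_0; lra | apply ex_RInt_continuous_R; continuity_R |].
    intros; apply pow2_ge_0. }
  enough (4 * Int2PI (fun s => (rot_avg k h s - a0 h) ^ 2) <= Int2PI (fun s => rot_avg k h' s ^ 2))
    by lra.
  apply W.
  - intros x; apply is_derive_rot_avg_sub.
  - intros x; apply is_derive_rot_avg; auto.
  - continuity_R.
  - intros x; rewrite periodic_rot_avg; auto.
  - rewrite fourier_cos_0, RInt_minus_R, RInt_rot_avg, RInt_const_R by (lia || continuity_R || auto).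
    unfold a0, avg_width; field; pose proof PI_RGT_0; lra.
  - rewrite fourier_cos_1, (RInt_ext_R _ (fun s => rot_avg k h s * cos s - a0 h * cos s))
      by (intros; ring).
    RInt_lin; rewrite RInt_rot_avg_mul_cos, RInt_cos by auto; ring.
  - rewrite fourier_sin_1, (RInt_ext_R _ (fun s => rot_avg k h s * sin s - a0 h * sin s))
      by (intros; ring).
    RInt_lin; rewrite RInt_rot_avg_mul_sin, RInt_sin by auto; ring.
Qed.

Lemma support_dist2_sq : support_dist2 h (ops_plus_disk_support k h) ^ 2 =
  Int2PI (fun s => (h s - rot_avg k h s - a1 h * cos s - b1 h * sin s) ^ 2).
Proof.
  unfold support_dist2.
  rewrite (RInt_ext_R _ (fun s => (h s - rot_avg k h s - a1 h * cos s - b1 h * sin s) ^ 2))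
    by (intros s; rewrite pow2_abs, ops_plus_disk_support_eq; ring).
  apply pow2_sqrt, RInt_ge_0; [pose proof PI_RGT_0; lra | apply ex_RInt_continuous_R; continuity_R |].
  intros; apply pow2_ge_0.
Qed.

Lemma residual_wirtinger :
  4 * Int2PI (fun s => (h s - rot_avg k h s - a1 h * cos s - b1 h * sin s) ^ 2)
  <= Int2PI (fun s => (h' s - rot_avg k h' s - b1 h * cos s - (- a1 h) * sin s) ^ 2).
Proof.
  pose proof PI_RGT_0.
  set (a := a1 h); set (b := b1 h).
  rewrite (RInt_ext_R (fun s => (h' s - rot_avg k h' s - b * cos s - (- a) * sin s) ^ 2)
    (fun s => (h' s - rot_avg k h' s + a * sin s - b * cos s) ^ 2)) by (intros; ring).
  apply (wirtinger_inequality _ _ (fun s => h'' s - rot_avg k h'' s + a * cos s + b * sin s)).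
  - intros x; auto_derive.
    + repeat split; [exists (h' x) | exists (rot_avg k h' x); apply is_derive_rot_avg]; auto.
    + rewrite (Derive_is_derive h h' x), (Derive_is_derive (rot_avg k h) (rot_avg k h') x)
        by (intros; auto; apply is_derive_rot_avg; auto).
      ring.
  - intros x; auto_derive.
    + repeat split; [exists (h'' x) | exists (rot_avg k h'' x); apply is_derive_rot_avg]; auto.
    + rewrite (Derive_is_derive h' h'' x), (Derive_is_derive (rot_avg k h') (rot_avg k h'') x)
        by (intros; auto; apply is_derive_rot_avg; auto).
      ring.
  - continuity_R.
  - intros x; rewrite h_periodic, periodic_rot_avg, cos_periodic, sin_periodic; auto.
  - rewrite fourier_cos_0; RInt_lin.
    rewrite RInt_rot_avg, RInt_cos, RInt_sin by (lia || auto); ring.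
  - rewrite fourier_cos_1, (RInt_ext_R _ (fun s => h s * cos s - rot_avg k h s * cos s
      - a * (cos s * cos s) - b * (sin s * cos s))) by (intros; ring).
    RInt_lin; rewrite RInt_rot_avg_mul_cos, RInt_cos_sq, RInt_sin_cos by (lia || auto).
    unfold a, a1; field; lra.
  - rewrite fourier_sin_1, (RInt_ext_R _ (fun s => h s * sin s - rot_avg k h s * sin s
      - a * (sin s * cos s) - b * (sin s * sin s))) by (intros; ring).
    RInt_lin; rewrite RInt_rot_avg_mul_sin, RInt_sin_sq, RInt_sin_cos by (lia || auto).
    unfold b, b1; field; lra.
Qed.

Lemma RInt_residual_sq :
  Int2PI (fun s => (h s - rot_avg k h s - a1 h * cos s - b1 h * sin s) ^ 2)
  = Int2PI (fun s => h s ^ 2) - Int2PI (fun s => rot_avg k h s ^ 2) - PI * (a1 h ^ 2 + b1 h ^ 2).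
Proof. rewrite RInt_sq_rot_avg_residual, RInt_mul_cos_a1, RInt_mul_sin_b1 by auto; ring. Qed.

Lemma RInt_residual_derive_sq :
  Int2PI (fun s => (h' s - rot_avg k h' s - b1 h * cos s - (- a1 h) * sin s) ^ 2)
  = Int2PI (fun s => h' s ^ 2) - Int2PI (fun s => rot_avg k h' s ^ 2) - PI * (a1 h ^ 2 + b1 h ^ 2).
Proof.
  destruct (RInt_derive_mul_cos_sin h h' h_derive h'_cont h_periodic) as [Ec Es].
  rewrite RInt_sq_rot_avg_residual, Ec, Es, RInt_mul_cos_a1, RInt_mul_sin_b1 by auto; ring.
Qed.

Lemma isoperimetric_deficit_bound (h_pos : forall s, 0 < h s + h'' s) :
  (oval_length h) ^ 2 - 4 * PI * oval_area h - 4 * PI * Rabs (ops_area k h)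
    >= 6 * PI * (support_dist2 h (ops_plus_disk_support k h)) ^ 2.
Proof.
  pose proof PI_RGT_0; pose proof ops_area_expand; pose proof residual_wirtinger as W.
  rewrite RInt_residual_sq, RInt_residual_derive_sq in W.
  rewrite (oval_length_support h h' h''), (oval_area_support h h' h''), support_dist2_sq,
    RInt_residual_sq, Rabs_left1 by (auto using ops_area_nonpos).
  nra.
Qed.

End OrderPreservingSet.

Theorem theorem5p7 (k : nat) (h : R -> R) :
  (2 < k)%nat ->
  is_oval_support h ->
  (oval_length h) ^ 2 - 4 * PI * oval_area h - 4 * PI * Rabs (ops_area k h)
    >= 6 * PI * (support_dist2 h (ops_plus_disk_support k h)) ^ 2.
Proof.
  intros Hk [Hper [Hsmooth Hpos]].
  apply (isoperimetric_deficit_bound k h (Derive h) (Derive (Derive h)));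
    [lia | | | | exact Hper | exact Hpos].
  - intros x; apply Derive_correct, (Hsmooth 0%nat x).
  - intros x; apply Derive_correct, (Hsmooth 1%nat x).
  - intros x; apply (ex_derive_continuous (V := R_NormedModule)), (Hsmooth 2%nat x).
Qed.
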